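(* For any distribution of $H$ on $(0,1)$, let $Q_\bullet=(Q_k)_{k\ge0}$ be a Markov chain on $\{1,2,\dots\}$ with transition probabilities $p_{m,n}=\binom{n-1}{m-1}\mu_{n-m,m}$ for $1\le m\le n$ (and $0$ for $n<m$). Then $Q_\bullet$ has the transition mechanism of a Galton–Watson branching process in a random environment in which, at each generation $k$, every individual present independently has a number of offspring with the geometric$(1-H_k)$ distribution on $\{1,2,\dots\}$ (i.e. $P(\text{offspring}=r\mid H_k)=H_k^{r-1}(1-H_k)$), with $H_0,H_1,\dots$ i.i.d. copies of $H$. Equivalently, for every $k\ge0$, $m\ge1$ and $|z|\le1$, $$E\big(z^{Q_{k+1}-Q_k}\,\big|\,Q_k=m\big)=E\Big(\frac{1-H}{1-Hz}\Big)^m .$$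
   Context: $H$ is a random variable with values in $(0,1)$ and $\mu_{i,j}:=E[H^i(1-H)^j]$. *)

From HB Require Import structures.
From mathcomp Require Import all_boot all_order all_algebra.
From mathcomp Require Import all_classical all_reals all_analysis.
From mathcomp Require Import complex.
Set Implicit Arguments. Unset Strict Implicit. Unset Printing Implicit Defensive.
Import Order.TTheory GRing.Theory Num.Theory.
Local Open Scope ring_scope.

Definition rE {d} {T : measurableType d} {R : realType} (P : probability T R)
  (X : T -> R) : R := fine ('E_P[X])%E.

Definition mu {d} {T : measurableType d} {R : realType} (P : probability T R)
  (H : T -> R) (i j : nat) : R := rE P (fun w => H w ^+ i * (1 - H w) ^+ j).

Definition ptrans {d} {T : measurableType d} {R : realType} (P : probability T R)
  (H : T -> R) (m n : nat) : R :=
  if (m <= n)%N then 'C(n.-1, m.-1)%:R * mu P H (n - m) m else 0.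

Definition geom_pmf {R : realType} (h : R) (r : nat) : R :=
  if r is r'.+1 then h ^+ r' * (1 - h) else 0.

(* law of the sum of m independent geometric(1-h) offspring numbers
   (m-fold convolution of geom_pmf h) *)
Fixpoint geom_conv {R : realType} (h : R) (m n : nat) : R :=
  match m with
  | 0 => (n == 0%N)%:R
  | m'.+1 => \sum_(j < n.+1) geom_pmf h j * geom_conv h m' (n - j)
  end.

Definition cE {d} {T : measurableType d} {R : realType} (P : probability T R)
  (X : T -> R[i]) : R[i] :=
  Complex (rE P (fun w => complex.Re (X w))) (rE P (fun w => complex.Im (X w))).

(* Given H = h, a sum of m independent geometric(1-h) variables on {1,2,...}
   is negative binomial, with law C(n-1,m-1) h^(n-m) (1-h)^m: both sides
   satisfy the same recursion in (m, n).  Averaging over H gives p_{m,n}.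

   For the generating function, write t_j(K, x) for the tail of the negative
   binomial series sum_k C(k+j,j) x^k = (1-x)^-(j+1) after K terms.  It obeys
   t_{j+1} = (1-x)^-1 (t_j + C(K+j,j+1) x^K), hence |t_j(K, x)| <= t_j(K, r)
   whenever |x| <= r < 1.  Taking x = r shows t_j(K, r) >= 0, so the partial
   sums are bounded, their terms tend to 0, and then t_j(K, r) -> 0 by
   induction on j.  With x = H z the partial sums of E(z^(Q_{k+1}-Q_k)) are
   expectations of functions bounded by 1, and dominated convergence applies
   to their real and imaginary parts. *)

From HB Require Import structures.
From mathcomp Require Import all_boot all_order all_algebra.
From mathcomp Require Import all_classical all_reals all_analysis.
From mathcomp Require Import complex.
From mathcomp Require Import measurable_realfun ring lra zify.
Set Implicit Arguments. Unset Strict Implicit. Unset Printing Implicit Defensive.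
Import Order.TTheory GRing.Theory Num.Theory.
Import numFieldNormedType.Exports.
Local Open Scope classical_set_scope.
Local Open Scope ring_scope.

Section NegativeBinomialLaw.
Variable R : realType.
Implicit Types (h : R) (m n : nat).

Definition negbin_pmf h m n : R :=
  if (m <= n)%N then 'C(n.-1, m.-1)%:R * h ^+ (n - m) * (1 - h) ^+ m else 0.

Lemma negbin_pmf_addn h j k :
  negbin_pmf h j.+1 (k + j.+1) = 'C(k + j, j)%:R * h ^+ k * (1 - h) ^+ j.+1.
Proof. by rewrite /negbin_pmf leq_addl addnK addnS. Qed.

Lemma negbin_pmf1 h n : negbin_pmf h 1 n = geom_pmf h n.
Proof. by case: n => [|n] //; rewrite /negbin_pmf bin0 subn1 mul1r expr1. Qed.

Lemma negbin_pmfSS h m n :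
  negbin_pmf h m.+2 n.+1 = (1 - h) * negbin_pmf h m.+1 n + h * negbin_pmf h m.+2 n.
Proof.
rewrite /negbin_pmf ltnS; case: (leqP m.+1 n) => [le_mn | lt_nm]; last first.
  have -> : (m.+2 <= n)%N = false by lia.
  by rewrite !mulr0 addr0.
rewrite -(subnK le_mn); move: (n - m.+1)%N => k.
case: k => [|k].
  by rewrite add0n ltnn !subnn !binn exprS; ring.
have -> : ((k.+1 + m.+1).+1.-1 = (k + m).+2)%N by lia.
have -> : ((k.+1 + m.+1).-1 = (k + m).+1)%N by lia.
have -> : ((k.+1 + m.+1).+1 - m.+2 = k.+1)%N by lia.
have -> : (k.+1 + m.+1 - m.+1 = k.+1)%N by lia.
have -> : (k.+1 + m.+1 - m.+2 = k)%N by lia.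
have -> : (m.+1 < k.+1 + m.+1)%N by lia.
rewrite binS natrD !exprS; ring.
Qed.

Lemma geom_conv1 h n : geom_conv h 1 n = geom_pmf h n.
Proof.
rewrite /= big_ord_recr /= subnn mulr1 big1 ?add0r // => i _.
by rewrite subn_eq0 leqNgt ltn_ord mulr0.
Qed.

Lemma geom_convSS h m n :
  geom_conv h m.+1 n.+1 = (1 - h) * geom_conv h m n + h * geom_conv h m.+1 n.
Proof.
rewrite [LHS]/= 2!big_ord_recl /= mul0r add0r expr0 mul1r.
rewrite [in RHS]/= big_ord_recl /= mul0r add0r mulr_sumr /bump /=.
rewrite subn1 /=; congr (_ + _).
by apply: eq_bigr => i _; rewrite !add1n subSS add0n exprS !mulrA.
Qed.

Lemma geom_conv_negbin h m n : (0 < m)%N -> geom_conv h m n = negbin_pmf h m n.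
Proof.
case: m => // m _; elim: m n => [|m IHm] n; first by rewrite geom_conv1 negbin_pmf1.
elim: n => [|n IHn]; first by rewrite /= big_ord1 mul0r.
by rewrite geom_convSS IHn IHm negbin_pmfSS.
Qed.
End NegativeBinomialLaw.

Section NegativeBinomialSeries.
Variable F : fieldType.
Implicit Types (x : F) (j K : nat).

Definition nbsum j K x : F := \sum_(0 <= k < K) 'C(k + j, j)%:R * x ^+ k.

Definition nbtail j K x : F := (1 - x)^-1 ^+ j.+1 - nbsum j K x.

Lemma nbsum0 j x : nbsum j 0 x = 0.
Proof. by rewrite /nbsum big_geq. Qed.

Lemma nbsumS j K x : nbsum j K.+1 x = nbsum j K x + 'C(K + j, j)%:R * x ^+ K.
Proof. by rewrite /nbsum big_nat_recr. Qed.

Lemma mulB_nbsum0 K x : (1 - x) * nbsum 0 K x = 1 - x ^+ K.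
Proof.
elim: K => [|K IH]; first by rewrite nbsum0 mulr0 expr0 subrr.
by rewrite nbsumS mulrDr IH addn0 bin0 exprS; ring.
Qed.

Lemma mulB_nbsumS j K x :
  (1 - x) * nbsum j.+1 K x = nbsum j K x - 'C(K + j, j.+1)%:R * x ^+ K.
Proof.
elim: K => [|K IH]; first by rewrite !nbsum0 mulr0 add0n bin_small // mul0r subr0.
by rewrite !nbsumS mulrDr IH addnS addSn binS natrD exprS; ring.
Qed.

Lemma nbtail0 K x : 1 - x != 0 -> nbtail 0 K x = (1 - x)^-1 * x ^+ K.
Proof.
move=> x_neq1; rewrite /nbtail -[nbsum 0 K x](mulKf x_neq1) mulB_nbsum0 expr1.
by ring.
Qed.

Lemma nbtailS j K x : 1 - x != 0 ->
  nbtail j.+1 K x = (1 - x)^-1 * (nbtail j K x + 'C(K + j, j.+1)%:R * x ^+ K).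
Proof.
move=> x_neq1; rewrite /nbtail -[nbsum j.+1 K x](mulKf x_neq1) mulB_nbsumS exprS.
by ring.
Qed.

End NegativeBinomialSeries.

Lemma rmorph_nbtail (F F' : fieldType) (f : {rmorphism F -> F'}) j K (x : F) :
  f (nbtail j K x) = nbtail j K (f x).
Proof.
rewrite /nbtail /nbsum rmorphB rmorphXn fmorphV rmorphB rmorph1 rmorph_sum.
by congr (_ - _); apply: eq_bigr => k _; rewrite rmorphM rmorph_nat rmorphXn.
Qed.

Section NegativeBinomialSeriesBounds.
Variable F : numFieldType.
Implicit Types (x r : F) (j K : nat).

Lemma norm_nbsum_le j K x r : `|x| <= r -> `|nbsum j K x| <= nbsum j K r.
Proof.
move=> le_xr; apply: le_trans (ler_norm_sum _ _ _) _; apply: ler_sum => k _.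
rewrite normrM normr_nat normrX ler_wpM2l // lerXn2r // nnegrE.
exact: le_trans le_xr.
Qed.

Lemma norm_nbtail_le j K x r : `|x| <= r -> r < 1 -> `|nbtail j K x| <= nbtail j K r.
Proof.
move=> le_xr lt_r1; have r_ge0 : 0 <= r by apply: le_trans le_xr.
have r1_gt0 : 0 < 1 - r by rewrite subr_gt0.
have le_r1_x1 : 1 - r <= `|1 - x|.
  by apply: le_trans (lerB_dist _ _); rewrite normr1 lerB.
have x1_neq0 : 1 - x != 0 by rewrite -normr_gt0 (lt_le_trans r1_gt0).
have r1_neq0 : 1 - r != 0 by rewrite gt_eqF.
have le_inv : `|(1 - x)^-1| <= (1 - r)^-1.
  by rewrite normfV lef_pV2 ?posrE // (lt_le_trans r1_gt0).
have le_xK : `|x ^+ K| <= r ^+ K by rewrite normrX lerXn2r // nnegrE.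
elim: j => [|j IH]; first by rewrite !nbtail0 // normrM ler_pM.
rewrite !nbtailS // normrM ler_pM //; apply: le_trans (ler_normD _ _) _.
by rewrite lerD // normrM normr_nat ler_wpM2l.
Qed.

Lemma nbtail_ge0 j K r : 0 <= r < 1 -> 0 <= nbtail j K r.
Proof.
move=> /andP[r_ge0 lt_r1].
by apply: le_trans (normr_ge0 _) (norm_nbtail_le _ _ _ lt_r1); rewrite ger0_norm.
Qed.

Lemma nbsum_le j K r : 0 <= r < 1 -> nbsum j K r <= (1 - r)^-1 ^+ j.+1.
Proof. by move=> r01; rewrite -subr_ge0 nbtail_ge0. Qed.
End NegativeBinomialSeriesBounds.

Section NegativeBinomialSeriesLimit.
Variable R : realType.
Implicit Types (h : R) (j : nat).

Lemma cvg_nbterm j h : 0 <= h < 1 -> (fun K => 'C(K + j, j)%:R * h ^+ K) @ \oo --> 0.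
Proof.
move=> h01; have /andP[h_ge0 _] := h01.
apply: cvg_series_cvg_0; apply: nondecreasing_is_cvgn.
  by apply: nondecreasing_series => n _ _; rewrite mulr_ge0 ?exprn_ge0.
by exists ((1 - h)^-1 ^+ j.+1) => _ [K _ <-]; exact: nbsum_le h01.
Qed.

Lemma cvg_nbtail j h : 0 <= h < 1 -> (fun K => nbtail j K h) @ \oo --> 0.
Proof.
move=> h01; have /andP[h_ge0 lt_h1] := h01.
have h1_neq0 : 1 - h != 0 by rewrite subr_eq0 eq_sym lt_eqF.
elim: j => [|j IH].
  under [fun K => _]funext do rewrite nbtail0 //.
  rewrite -(mulr0 (1 - h)^-1); apply: cvgM; first exact: cvg_cst.
  by apply: cvg_expr; rewrite ger0_norm.
under [fun K => _]funext do rewrite nbtailS //.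
rewrite -(mulr0 (1 - h)^-1) -(addr0 0); apply: cvgM; first exact: cvg_cst.
apply: cvgD => //.
apply: (@squeeze_cvgr _ _ _ _ (cst 0) (fun K => 'C(K + j.+1, j.+1)%:R * h ^+ K)).
- apply: nearW => K /=; rewrite mulr_ge0 ?exprn_ge0 //=.
  by rewrite ler_wpM2r ?exprn_ge0 // ler_nat leq_bin2l // addnS.
- exact: cvg_cst.
- exact: cvg_nbterm.
Qed.
End NegativeBinomialSeriesLimit.

Section NegativeBinomialGeneratingFunction.
Variable F : numFieldType.
Implicit Types (h z : F) (j K : nat).

Lemma norm_mul_le_l h z : 0 <= h -> `|z| <= 1 -> `|h * z| <= h.
Proof. by move=> h_ge0 z_le1; rewrite normrM ger0_norm // ler_piMr. Qed.

Lemma norm_geo_ratio_le1 h z : 0 <= h < 1 -> `|z| <= 1 ->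
  `|(1 - h) / (1 - h * z)| <= 1.
Proof.
move=> /andP[h_ge0 lt_h1] z_le1; have h1_gt0 : 0 < 1 - h by rewrite subr_gt0.
have le_h1 : 1 - h <= `|1 - h * z|.
  apply: le_trans (lerB_dist _ _); rewrite normr1 lerB //.
  exact: norm_mul_le_l.
rewrite normrM normfV (ger0_norm (ltW h1_gt0)) ler_pdivrMr ?mul1r //.
exact: lt_le_trans le_h1.
Qed.

Lemma norm_negbin_gf_partial_sub h z j K : 0 <= h < 1 -> `|z| <= 1 ->
  `|(1 - h) ^+ j.+1 * nbsum j K (h * z) - ((1 - h) / (1 - h * z)) ^+ j.+1|
    <= (1 - h) ^+ j.+1 * nbtail j K h.
Proof.
move=> /andP[h_ge0 lt_h1] z_le1; have h1_ge0 : 0 <= (1 - h) ^+ j.+1.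
  by rewrite exprn_ge0 // subr_ge0 ltW.
rewrite exprMn -mulrBr.
have -> : nbsum j K (h * z) - (1 - h * z)^-1 ^+ j.+1 = - nbtail j K (h * z).
  by rewrite /nbtail opprB.
rewrite normrM normrN ger0_norm // ler_wpM2l //.
exact: norm_nbtail_le (norm_mul_le_l h_ge0 z_le1) lt_h1.
Qed.

Lemma norm_negbin_gf_partial_le1 h z j K : 0 <= h < 1 -> `|z| <= 1 ->
  `|(1 - h) ^+ j.+1 * nbsum j K (h * z)| <= 1.
Proof.
move=> h01 z_le1; have /andP[h_ge0 lt_h1] := h01.
have h1_ge0 : 0 <= (1 - h) ^+ j.+1 by rewrite exprn_ge0 // subr_ge0 ltW.
have h1_neq0 : (1 - h) ^+ j.+1 != 0 by rewrite expf_neq0 // subr_eq0 eq_sym lt_eqF.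
rewrite normrM ger0_norm // -[leRHS](mulfV h1_neq0) -exprVn ler_wpM2l //.
apply: le_trans (norm_nbsum_le _ _ (norm_mul_le_l h_ge0 z_le1)) _.
exact: nbsum_le.
Qed.
End NegativeBinomialGeneratingFunction.

Local Open Scope complex_scope.

Lemma negbin_gf_partialE (R : realType) (h : R) (z : R[i]) j K :
  (1 - h%:C) ^+ j.+1 * nbsum j K (h%:C * z) =
  \sum_(0 <= k < K) (negbin_pmf h j.+1 (k + j.+1))%:C * z ^+ k.
Proof.
rewrite /nbsum mulr_sumr; apply: eq_bigr => k _.
by rewrite negbin_pmf_addn !rmorphM !rmorphXn rmorph_nat rmorphB rmorph1 exprMn; ring.
Qed.

Lemma cvgr_dist_bound (R : realType) (u e : nat -> R) (l : R) :
  (forall n, `|u n - l| <= e n) -> e @ \oo --> 0 -> u @ \oo --> l.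
Proof.
move=> ue e0; apply: (@squeeze_cvgr _ _ _ _ (fun n => l - e n) (fun n => l + e n)).
- by apply: nearW => n; have := ue n; rewrite ler_norml => /andP[? ?]; apply/andP; lra.
- by rewrite -[X in _ --> X]subr0; apply: cvgB => //; exact: cvg_cst.
- by rewrite -[X in _ --> X]addr0; apply: cvgD => //; exact: cvg_cst.
Qed.

Section RealExpectation.
Context {R : realType} {d : measure_display} {T : measurableType d}
  (P : probability T R).

Lemma rE_Rintegral (X : T -> R) : rE P X = \int[P]_(w in setT) X w.
Proof. by rewrite /rE unlock. Qed.

Lemma bounded_integrable (f : T -> R) (M : R) : measurable_fun setT f ->
  (forall w, `|f w| <= M) -> P.-integrable setT (EFin \o f).
Proof.
move=> mf fM; apply: (@le_integrable _ _ _ P _ measurableT _ (EFin \o cst M)).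
- exact/measurable_EFinP.
- by move=> w _ /=; rewrite lee_fin (le_trans (fM w)) ?ler_norm.
- exact: finite_measure_integrable_cst.
Qed.

Lemma rE_cst0 : rE P (fun=> 0) = 0.
Proof. by rewrite rE_Rintegral /Rintegral integral0. Qed.

Lemma rE_Zl (c : R) (f : T -> R) : P.-integrable setT (EFin \o f) ->
  rE P (fun w => c * f w) = c * rE P f.
Proof. by move=> intf; rewrite !rE_Rintegral RintegralZl. Qed.

Lemma rE_Zr (c : R) (f : T -> R) : P.-integrable setT (EFin \o f) ->
  rE P (fun w => f w * c) = rE P f * c.
Proof. by move=> intf; rewrite !rE_Rintegral RintegralZr. Qed.

Lemma rE_sum (I : Type) (s : seq I) (f : I -> T -> R) :
  (forall i, P.-integrable setT (EFin \o f i)) ->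
  rE P (fun w => \sum_(i <- s) f i w) = \sum_(i <- s) rE P (f i).
Proof.
move=> intf; elim: s => [|i s IH].
  rewrite big_nil -[RHS]rE_cst0; congr (rE P _).
  by apply: funext => w; rewrite big_nil.
rewrite big_cons -IH !rE_Rintegral.
under eq_Rintegral do rewrite big_cons.
rewrite RintegralD //.
have -> : EFin \o (fun w => \sum_(k <- s) f k w) = (fun w => \sum_(k <- s) (EFin \o f k) w).
  by apply: funext => w /=; rewrite sumEFin.
exact: integrable_sum.
Qed.

Lemma cvg_rE_dominated (f_ : nat -> T -> R) (f : T -> R) (M : R) :
  (forall n, measurable_fun setT (f_ n)) ->
  (forall w, (fun n => f_ n w) @ \oo --> f w) ->
  (forall n w, `|f_ n w| <= M) -> (forall w, `|f w| <= M) ->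
  (fun n => rE P (f_ n)) @ \oo --> rE P f.
Proof.
move=> mf cvg_f bf_ bf.
have mlim : measurable_fun setT f.
  by apply: (measurable_fun_cvg mf) => w _; exact: cvg_f.
have intf : P.-integrable setT (EFin \o f) by exact: bounded_integrable bf.
have cvg_int : (\int[P]_w (f_ n w)%:E)%E @[n --> \oo] --> (\int[P]_w (f w)%:E)%E.
  apply: (@dominated_cvg _ T R P setT measurableT _ _ (cst M%:E)) => //.
  - by move=> n; apply/measurable_EFinP.
  - by move=> w _; apply: cvg_EFin; [exact: nearW | exact: cvg_f].
  - exact: finite_measure_integrable_cst.
  - by move=> n w _; rewrite abse_EFin lee_fin.
have fin_int := integrable_fin_num measurableT intf.
under [fun n => _]funext do rewrite rE_Rintegral.
by rewrite rE_Rintegral; apply: fine_cvg; rewrite fineK.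
Qed.
End RealExpectation.

Section GaltonWatsonTransition.
Variables (R : realType) (d : measure_display) (T : measurableType d)
  (P : probability T R) (H : {RV P >-> R}).
Hypothesis H01 : forall w, 0 < H w < 1.

Lemma measurable_Hpow a b : measurable_fun setT (fun w => H w ^+ a * (1 - H w) ^+ b).
Proof.
have mH : measurable_fun setT H by exact: measurable_funPT.
by apply: measurable_funM; apply: measurable_funX => //; exact: measurable_funB.
Qed.

Lemma norm_Hpow_le1 a b w : `|H w ^+ a * (1 - H w) ^+ b| <= 1.
Proof.
have /andP[h_gt0 lt_h1] := H01 w.
have h_ge0 : 0 <= H w by lra.
have h_le1 : H w <= 1 by lra.
have h1_ge0 : 0 <= 1 - H w by lra.
have h1_le1 : 1 - H w <= 1 by lra.
rewrite normrM !normrX (ger0_norm h_ge0) (ger0_norm h1_ge0).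
by rewrite mulr_ile1 ?exprn_ge0 ?exprn_ile1.
Qed.

Lemma measurable_negbin m n : measurable_fun setT (fun w => negbin_pmf (H w) m n).
Proof.
rewrite /negbin_pmf; case: (m <= n)%N; last exact: measurable_cst.
have -> : (fun w => 'C(n.-1, m.-1)%:R * H w ^+ (n - m) * (1 - H w) ^+ m)
    = (fun w => 'C(n.-1, m.-1)%:R * (H w ^+ (n - m) * (1 - H w) ^+ m)).
  by apply: funext => w; rewrite mulrA.
by apply: measurable_funM => //; exact: measurable_Hpow.
Qed.

Lemma norm_negbin_le m n w : `|negbin_pmf (H w) m n| <= 'C(n.-1, m.-1)%:R.
Proof.
rewrite /negbin_pmf; case: ifP => _; last by rewrite normr0.
by rewrite -mulrA normrM normr_nat ler_piMr ?norm_Hpow_le1.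
Qed.

Lemma integrable_negbin m n : P.-integrable setT (EFin \o (fun w => negbin_pmf (H w) m n)).
Proof. exact: bounded_integrable (measurable_negbin m n) (norm_negbin_le m n). Qed.

Lemma ptrans_negbin m n : ptrans P H m n = rE P (fun w => negbin_pmf (H w) m n).
Proof.
rewrite /ptrans /negbin_pmf; case: (m <= n)%N; last by rewrite rE_cst0.
rewrite /mu -rE_Zl; last exact: bounded_integrable (measurable_Hpow _ _) (norm_Hpow_le1 _ _).
by congr (rE P _); apply: funext => w; rewrite mulrA.
Qed.

Local Open Scope complex_scope.

(* [p] will be [Re] or [Im], through which [cE] is defined. *)
Variable p : R[i] -> R.
Hypothesis pD : forall a b, p (a + b) = p a + p b.
Hypothesis pZ : forall (c : R) a, p (c%:C * a) = c * p a.
Hypothesis norm_p : forall a, (`|p a|)%:C <= `|a|.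

Lemma p_sum (I : Type) (s : seq I) (f : I -> R[i]) :
  p (\sum_(i <- s) f i) = \sum_(i <- s) p (f i).
Proof.
have p0 : p 0 = 0 by rewrite -(mulr0 0%:C) pZ mul0r.
by elim: s => [|i s IH]; rewrite ?big_nil ?p0 // !big_cons pD IH.
Qed.

Lemma pB a b : p (a - b) = p a - p b.
Proof. by rewrite pD -[- b]mulN1r -(rmorphN1 (real_complex R)) pZ mulN1r. Qed.

Lemma norm_p_le a (r : R) : `|a| <= r%:C -> `|p a| <= r.
Proof. by move=> le_ar; rewrite -lecR (le_trans (norm_p a)). Qed.

Lemma complexH_ge0_lt1 w : 0 <= (H w)%:C < 1.
Proof. by have /andP[h_gt0 lt_h1] := H01 w; rewrite ler0c ltcR ltW. Qed.

Definition gf_partial j z K w : R[i] :=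
  (1 - (H w)%:C) ^+ j.+1 * nbsum j K ((H w)%:C * z).

Lemma proj_gf_partialE j z K : (fun w => p (gf_partial j z K w)) =
  (fun w => \sum_(0 <= k < K) negbin_pmf (H w) j.+1 (k + j.+1) * p (z ^+ k)).
Proof.
apply: funext => w; rewrite /gf_partial negbin_gf_partialE p_sum.
by apply: eq_bigr => k _; rewrite pZ.
Qed.

Lemma proj_ptrans_partialE j z N :
  p (\sum_(j.+1 <= n < N) (ptrans P H j.+1 n)%:C * z ^+ (n - j.+1)) =
  rE P (fun w => p (gf_partial j z (N - j.+1) w)).
Proof.
rewrite proj_gf_partialE (big_addn 0 N j.+1) p_sum rE_sum => [|k]; last first.
  apply: (@bounded_integrable _ _ _ _ _ ('C((k + j.+1).-1, j)%:R * `|p (z ^+ k)|)).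
    by apply: measurable_funM => //; exact: measurable_negbin.
  by move=> w; rewrite normrM ler_wpM2r ?norm_negbin_le.
by apply: eq_bigr => k _; rewrite addnK pZ ptrans_negbin rE_Zr // integrable_negbin.
Qed.

Lemma cvg_proj_negbin_gf j z : `|z| <= 1 ->
  (fun N => p (\sum_(j.+1 <= n < N) (ptrans P H j.+1 n)%:C * z ^+ (n - j.+1)))
   @ \oo --> rE P (fun w => p (((1 - (H w)%:C) / (1 - (H w)%:C * z)) ^+ j.+1)).
Proof.
move=> z_le1; rewrite (eq_cvg _ _ (proj_ptrans_partialE j z)) -(cvg_shiftn j.+1).
rewrite (eq_cvg _ _ (g := fun K => rE P (fun w => p (gf_partial j z K w)))); last first.
  by move=> n /=; rewrite addnK.
apply: (@cvg_rE_dominated _ _ _ P _ _ 1).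
- move=> K; rewrite proj_gf_partialE.
  by apply: measurable_sum => k; apply: measurable_funM => //; exact: measurable_negbin.
- move=> w; have /andP[h_gt0 lt_h1] := H01 w.
  apply: (@cvgr_dist_bound _ _ (fun K => (1 - H w) ^+ j.+1 * nbtail j K (H w))).
  + move=> K; rewrite -pB; apply: norm_p_le.
    rewrite rmorphM rmorph_nbtail rmorphXn rmorphB rmorph1.
    exact: norm_negbin_gf_partial_sub (complexH_ge0_lt1 w) z_le1.
  + rewrite -(mulr0 ((1 - H w) ^+ j.+1)); apply: cvgM; first exact: cvg_cst.
    by apply: cvg_nbtail; rewrite ltW.
- move=> K w; apply: norm_p_le; rewrite rmorph1.
  exact: norm_negbin_gf_partial_le1 (complexH_ge0_lt1 w) z_le1.
- move=> w; apply: norm_p_le; rewrite rmorph1 normrX exprn_ile1 //.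
  exact: norm_geo_ratio_le1 (complexH_ge0_lt1 w) z_le1.
Qed.
End GaltonWatsonTransition.

Theorem mainTheorem4 (R : realType) (d : measure_display) (T : measurableType d)
  (P : probability T R) (H : {RV P >-> R})
  (H01 : forall w, 0 < H w < 1) :
  (forall m n : nat, (1 <= m)%N ->
     ptrans P H m n = rE P (fun w => geom_conv (H w) m n)) /\
  (forall (m : nat) (z : R[i]), (1 <= m)%N ->
     `|z| <= 1 ->
     let S := fun N : nat =>
       \sum_(m <= n < N) (ptrans P H m n)%:C * z ^+ (n - m) in
     let G := cE P (fun w => ((1 - (H w)%:C) / (1 - (H w)%:C * z)) ^+ m) in
     (fun N => complex.Re (S N) : R) @ \oo --> (complex.Re G : R) /\
     (fun N => complex.Im (S N) : R) @ \oo --> (complex.Im G : R)).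
Proof.
split=> [m n m_gt0 | [//|j] z _ z_le1 S G].
  rewrite (ptrans_negbin H01); congr (rE P _); apply: funext => w.
  by rewrite geom_conv_negbin.
have i_norm1 : `|'i| = 1 :> R[i] by rewrite normc_def /= expr0n /= add0r expr1n sqrtr1.
split; apply: (cvg_proj_negbin_gf H01) => //.
- by case=> ? ? [].
- by move=> c [? ?] /=; rewrite mul0r subr0.
- exact: normc_ge_Re.
- by case=> ? ? [].
- by move=> c [? ?] /=; rewrite mul0r addr0.
- by move=> a; have := normc_ge_Re (a * 'i); rewrite ReiNIm normrN normrM i_norm1 mulr1.
Qed.
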